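(* Let $G$ be a topological group and let $\mathcal{K}$ be a collection of $G$-spaces that is closed under taking projective limits. Let $M_1, M_2$ be $\mathcal{K}$-universal $G$-spaces. Then $M_1$ and $M_2$ are isomorphic, i.e. there is a $G$-equivariant homeomorphism $M_1 \to M_2$.
   Context: A $G$-space is a nonempty compact Hausdorff space $X$ together with a jointly continuous action $G \times X \to X$ of the (Hausdorff) topological group $G$. An epimorphism of $G$-spaces is a surjective continuous $G$-equivariant map; $Y$ is a factor of $X$ if there is an epimorphism $X \to Y$. An isomorphism is a bijective epimorphism (equivalently a $G$-equivariant homeomorphism). Given a collection $\mathcal{K}$ of $G$-spaces, a $G$-space $M$ is $\mathcal{K}$-universal if $M \in \mathcal{K}$ and every $N \in \mathcal{K}$ is a factor of $M$. $\mathcal{K}$ is closed under taking projective limits means: whenever $\alpha$ is an ordinal, $(X_\gamma)_{\gamma<\alpha}$ are $G$-spaces in $\mathcal{K}$ and $\phi_{\delta,\gamma}: X_\gamma \to X_\delta$ ($\delta \le \gamma < \alpha$) are epimorphisms with $\phi_{\gamma,\gamma}=\mathrm{id}$ and $\phi_{\delta,\epsilon} = \phi_{\delta,\gamma}\circ\phi_{\gamma,\epsilon}$ for $\delta\le\gamma\le\epsilon$, the projective (inverse) limit $\{(x_\gamma)_{\gamma<\alpha} \in \prod_{\gamma<\alpha} X_\gamma : \phi_{\delta,\gamma}(x_\gamma)=x_\delta \text{ for all } \delta\le\gamma\}$, with the product topology and diagonal $G$-action, belongs to $\mathcal{K}$. *)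

From Stdlib Require Import List.
Import ListNotations.
Set Implicit Arguments.

Section Topology.

Definition is_topology {X : Type} (op : (X -> Prop) -> Prop) : Prop :=
  op (fun _ => True) /\
  (forall U V, op U -> op V -> op (fun x => U x /\ V x)) /\
  (forall F : (X -> Prop) -> Prop, (forall U, F U -> op U) ->
     op (fun x => exists U, F U /\ U x)).

Definition generated {X : Type} (S : (X -> Prop) -> Prop) (W : X -> Prop) : Prop :=
  forall x, W x -> exists l : list (X -> Prop),
    (forall U, In U l -> S U /\ U x) /\
    (forall y, (forall U, In U l -> U y) -> W y).

Definition prod_open {X Y : Type} (oX : (X -> Prop) -> Prop) (oY : (Y -> Prop) -> Prop)
  : (X * Y -> Prop) -> Prop :=
  generated (fun W =>
    (exists U, oX U /\ forall p, W p <-> U (fst p)) \/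
    (exists V, oY V /\ forall p, W p <-> V (snd p))).

Definition initial_open {X J : Type} (Y : J -> Type)
  (oY : forall j, (Y j -> Prop) -> Prop) (f : forall j, X -> Y j)
  : (X -> Prop) -> Prop :=
  generated (fun W => exists j V, oY j V /\ forall x, W x <-> V (f j x)).

Definition continuous {X Y : Type} (oX : (X -> Prop) -> Prop) (oY : (Y -> Prop) -> Prop)
  (f : X -> Y) : Prop :=
  forall V, oY V -> oX (fun x => V (f x)).

Definition hausdorff {X : Type} (op : (X -> Prop) -> Prop) : Prop :=
  forall x y, x <> y -> exists U V, op U /\ op V /\ U x /\ V y /\
    (forall z, ~ (U z /\ V z)).

Definition compact {X : Type} (op : (X -> Prop) -> Prop) : Prop :=
  forall F : (X -> Prop) -> Prop, (forall U, F U -> op U) ->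
    (forall x, exists U, F U /\ U x) ->
    exists l : list (X -> Prop), (forall U, In U l -> F U) /\
      (forall x, exists U, In U l /\ U x).

End Topology.

Definition is_topgroup {G : Type} (mul : G -> G -> G) (inv : G -> G) (one : G)
  (opG : (G -> Prop) -> Prop) : Prop :=
  (forall a b c, mul a (mul b c) = mul (mul a b) c) /\
  (forall a, mul one a = a) /\ (forall a, mul a one = a) /\
  (forall a, mul (inv a) a = one) /\ (forall a, mul a (inv a) = one) /\
  is_topology opG /\ hausdorff opG /\
  continuous (prod_open opG opG) opG (fun p => mul (fst p) (snd p)) /\
  continuous opG opG inv.

Record GData (G : Type) := mkGData {
  carrier : Type;
  gopen : (carrier -> Prop) -> Prop;
  gact : G -> carrier -> carrier }.
Arguments carrier {G}.
Arguments gopen {G}.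
Arguments gact {G}.

Definition is_GSpace {G : Type} (mul : G -> G -> G) (one : G)
  (opG : (G -> Prop) -> Prop) (D : GData G) : Prop :=
  inhabited (carrier D) /\ is_topology (gopen D) /\ compact (gopen D) /\
  hausdorff (gopen D) /\
  (forall x, gact D one x = x) /\
  (forall a b x, gact D (mul a b) x = gact D a (gact D b x)) /\
  continuous (prod_open opG (gopen D)) (gopen D) (fun p => gact D (fst p) (snd p)).

Definition equivariant {G : Type} (D E : GData G) (f : carrier D -> carrier E) : Prop :=
  forall a x, f (gact D a x) = gact E a (f x).

Definition epimorphism {G : Type} (D E : GData G) (f : carrier D -> carrier E) : Prop :=
  continuous (gopen D) (gopen E) f /\ (forall y, exists x, f x = y) /\ equivariant D E f.

Definition isomorphism {G : Type} (D E : GData G) (f : carrier D -> carrier E) : Prop :=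
  epimorphism D E f /\ (forall x y, f x = f y -> x = y).

Definition factor_of {G : Type} (E D : GData G) : Prop :=
  exists f, epimorphism D E f.

(* (I, le) is a well-order; it stands for an ordinal alpha = {gamma | gamma < alpha}. *)
Definition well_order {I : Type} (le : I -> I -> Prop) : Prop :=
  (forall i, le i i) /\ (forall i j, le i j -> le j i -> i = j) /\
  (forall i j k, le i j -> le j k -> le i k) /\ (forall i j, le i j \/ le j i) /\
  (forall P : I -> Prop, (exists i, P i) -> exists m, P m /\ forall j, P j -> le m j).

Section Limit.
Context {G : Type} {I : Type} (le : I -> I -> Prop) (X : I -> GData G)
  (phi : forall d g : I, carrier (X g) -> carrier (X d))
  (Heqv : forall d g, le d g -> equivariant (X g) (X d) (phi d g)).

Definition lim_carrier : Type :=
  { x : forall i, carrier (X i) | forall d g, le d g -> phi d g (x g) = x d }.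

Definition lim_open : (lim_carrier -> Prop) -> Prop :=
  initial_open (fun i => carrier (X i)) (fun i => gopen (X i))
    (fun i (x : lim_carrier) => proj1_sig x i).

Definition lim_act (a : G) (x : lim_carrier) : lim_carrier.
Proof.
  refine (exist _ (fun i => gact (X i) a (proj1_sig x i)) _).
  intros d g h. rewrite (Heqv h). f_equal. exact (proj2_sig x d g h).
Defined.

Definition proj_limit : GData G := mkGData lim_open lim_act.

End Limit.

Definition collection_of_GSpaces {G : Type} (mul : G -> G -> G) (one : G)
  (opG : (G -> Prop) -> Prop) (K : GData G -> Prop) : Prop :=
  forall D, K D -> is_GSpace mul one opG D.

Definition closed_under_proj_limits {G : Type} (K : GData G -> Prop) : Prop :=
  forall (I : Type) (le : I -> I -> Prop) (X : I -> GData G)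
    (phi : forall d g : I, carrier (X g) -> carrier (X d)),
    well_order le ->
    (forall i, K (X i)) ->
    (forall d g, le d g -> epimorphism (X g) (X d) (phi d g)) ->
    (forall d x, phi d d x = x) ->
    (forall d g e, le d g -> le g e -> forall x, phi d e x = phi d g (phi g e x)) ->
    forall Heqv : (forall d g, le d g -> equivariant (X g) (X d) (phi d g)),
    K (proj_limit le X phi Heqv).

Definition universal {G : Type} (K : GData G -> Prop) (M : GData G) : Prop :=
  K M /\ forall N, K N -> factor_of N M.

(* Well-order a set I that is too large to inject into the pairs of points of M1 (its power
   set will do), and build by transfinite recursion an inverse system indexed by I x bool,
   ordered lexicographically, whose stages alternate: M1 at (i, true), M2 at (i, false).
   Universality lets each stage map onto the projective limit of the earlier ones, which
   lies in K, and M1 onto the limit L of the whole system.  If for some i the bonding map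
   M1 = X(i, true) -> X(i, false) = M2 is injective, it is the required isomorphism.
   Otherwise each i gives a pair of points of M1 whose images in L agree at (i, false) but
   not at (i, true); such pairs are distinct for distinct i, which contradicts Cantor. *)

From Stdlib Require Import ClassicalEpsilon.
From mathcomp Require Import ssreflect ssrfun ssrbool eqtype boolp.
From mathcomp Require wochoice.

Definition strict {J : Type} (le : J -> J -> Prop) (x y : J) : Prop := le x y /\ x <> y.

Definition below {J : Type} (le : J -> J -> Prop) (j : J) : J -> Prop := strict le ^~ j.

Section WellOrder.
Context {J : Type} {le : J -> J -> Prop} (wo : well_order le).
Local Notation lt := (strict le).

Lemma wo_refl x : le x x.
Proof. by case: wo. Qed.

Lemma wo_antisym {x y} : le x y -> le y x -> x = y.
Proof. by case: wo => _ [antisym _]; apply: antisym. Qed.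

Lemma wo_trans {y x z} : le x y -> le y z -> le x z.
Proof. by case: wo => _ [_ [trans _]]; apply: trans. Qed.

Lemma wo_least (P : J -> Prop) : (exists i, P i) -> exists m, P m /\ forall j, P j -> le m j.
Proof. by case: wo => _ [_ [_ [_ least]]]; apply: least. Qed.

Lemma strict_trans {y x z} : lt x y -> lt y z -> lt x z.
Proof.
move=> [xy nxy] [yz nyz]; split; first exact: wo_trans xy yz.
by move=> exz; apply: nxy; apply: wo_antisym; rewrite // exz.
Qed.

Lemma strict_or_le x y : lt x y \/ le y x.
Proof.
case: wo => _ [_ [_ [total _]]]; case: (total x y) => [xy|]; last by right.
by case: (EM (x = y)) => [->|nxy]; [right; apply: wo_refl | left].
Qed.

Lemma le_eqVstrict {x y} : le x y -> x = y \/ lt x y.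
Proof. by move=> xy; case: (EM (x = y)); [left | right]. Qed.

Lemma strict_wf : well_founded lt.
Proof.
move=> x; apply: contrapT => nacc.
have [m [nacc_m min_m]] := wo_least (fun y => ~ Acc lt y) (ex_intro _ x nacc).
apply: nacc_m; constructor => y [ym nym]; apply: contrapT => nacc_y.
by apply: nym; apply: wo_antisym => //; apply: min_m.
Qed.

Lemma well_order_sub (P : J -> Prop) :
  well_order (fun s t : {i | P i} => le (proj1_sig s) (proj1_sig t)).
Proof.
split; first by move=> s; apply: wo_refl.
split.
  move=> [i Pi] [j Pj] /= ij ji; move: Pi Pj; rewrite (wo_antisym ij ji) => Pi Pj.
  by rewrite (Prop_irrelevance Pi Pj).
split; first by move=> s t u; apply: wo_trans.
split; first by move=> s t; case: (strict_or_le (proj1_sig s) (proj1_sig t)) => [[]|]; auto.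
move=> Q [[i Pi] Qi].
have [|m [[Pm Qm] min_m]] := wo_least (fun j => exists Pj : P j, Q (exist _ j Pj)).
  by exists i, Pi.
by exists (exist _ m Pm); split=> // [[j Pj] Qj]; apply: min_m; exists Pj.
Qed.

Lemma transfinite_choice (P : J -> Type) (Q : forall j, (forall i, P i) -> P j -> Prop) :
  (forall j, inhabited (P j)) ->
  (forall j f g x, (forall i, lt i j -> f i = g i) -> Q j f x -> Q j g x) ->
  (forall j f, (forall i, lt i j -> Q i f (f i)) -> exists x, Q j f x) ->
  exists f, forall j, Q j f (f j).
Proof.
move=> inhP Qlocal Qstep.
pose step j (rec : forall i, lt i j -> P i) := epsilon (inhP j)
  (fun x => forall f, (forall i (ij : lt i j), rec i ij = f i) -> Q j f x).
pose F := Fix strict_wf P step.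
have F_eq j : F j = step j (fun i _ => F i).
  apply: Fix_eq => k r1 r2 r12; congr step.
  by do 2 apply: functional_extensionality_dep => ?.
exists F; elim/(well_founded_ind strict_wf) => j IH.
have [x Qx] := Qstep j F IH.
have /(epsilon_spec (inhP j)) : exists x, forall f, (forall i, lt i j -> F i = f i) -> Q j f x.
  by exists x => f Ff; apply: Qlocal Qx.
by rewrite F_eq; apply.
Qed.

End WellOrder.

Section Lexicographic.
Context {I : Type} (le : I -> I -> Prop).

Definition lex_bool (x y : I * bool) : Prop :=
  strict le x.1 y.1 \/ (x.1 = y.1 /\ (x.2 ==> y.2)).

Lemma lex_bool_false_true i : strict lex_bool (i, false) (i, true).
Proof. by split; [right | case]. Qed.

Lemma lex_bool_strict_fst b c i k : strict le i k -> strict lex_bool (i, b) (k, c).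
Proof. by move=> ik; split; [left | case=> ki _; case: ik]. Qed.

Hypothesis wo : well_order le.

Lemma lex_bool_well_order : well_order lex_bool.
Proof.
have lt_irr i : ~ strict le i i by case.
have lt_asym i k : strict le i k -> ~ strict le k i.
  by move=> ik ki; apply: (lt_irr i); exact: (strict_trans wo ik ki).
split; first by move=> [i b]; right; split=> //; apply: implybb.
split.
  move=> [i b] [k c] [ik|[/= <- bc]] [ki|[/= ki cb]] //=.
  - by case: (lt_asym _ _ ik ki).
  - by rewrite ki in ik; case: (lt_irr _ ik).
  - by case: (lt_irr _ ki).
  - by case: b c bc cb => [] [].
split.
  move=> [i b] [k c] [m d] [ik|[/= <- bc]] [km|[/= <- cd]]; rewrite /lex_bool /=.
  - by left; exact: (strict_trans wo ik km).
  - by left.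
  - by left.
  - by right; split=> //; case: b c d bc cd => [] [] [].
split.
  move=> [i b] [k c]; rewrite /lex_bool /=.
  case: (strict_or_le wo i k) => [|/(le_eqVstrict)[ki|ki]]; [by left; left| |by right; left].
  by rewrite ki; case: b c => [] []; auto.
move=> P [[i0 b0] P0].
have [|m [[bm Pm] min_m]] := wo_least wo (fun i => exists b, P (i, b)).
  by exists i0, b0.
have least_at b : P (m, b) -> (forall c, P (m, c) -> b ==> c) ->
    exists x, P x /\ forall y, P y -> lex_bool x y.
  move=> Pmb bmin; exists (m, b); split=> // [[k c]] Pkc; rewrite /lex_bool /=.
  case: (le_eqVstrict (min_m k (ex_intro _ c Pkc))) => [mk|]; last by left.
  by rewrite -mk in Pkc *; right; split=> //; apply: bmin.
case: (EM (P (m, false))) => [Pmf|nPmf]; first by apply: (least_at false).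
case: bm Pm => // Pm; apply: (least_at true) => // [[]] // /nPmf.
Qed.

End Lexicographic.

Lemma exists_well_order (T : Type) : exists le : T -> T -> Prop, well_order le.
Proof.
have [R woR] := wochoice.well_ordering_principle {classic T}.
have least (P : T -> Prop) : (exists x, P x) -> exists m, P m /\ forall y, P y -> R m y.
  move=> [x Px]; have [|m [[/asboolP Pm min_m] _]] := woR [pred y | `[< P y >]].
    by exists x; apply/asboolP.
  by exists m; split=> // y Py; apply: min_m; apply/asboolP.
have least2 x y : exists m, (m = x \/ m = y) /\ R m x /\ R m y.
  have [m [mxy min_m]] := least (fun m => m = x \/ m = y) (ex_intro _ x (or_introl erefl)).
  by exists m; split=> //; split; apply: min_m; auto.
have Rrefl x : R x x by have [m [[]->[]]] := least2 x x.
have Rantisym x y : R x y -> R y x -> x = y.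
  move=> Rxy Ryx; have [|m [_ uniq]] := woR [pred z | (z == x) || (z == y)].
    by exists x; rewrite inE eqxx.
  have minimum z : z = x \/ z = y -> wochoice.minimum_of R [pred z | (z == x) || (z == y)] z.
    by case=> ->; split=> [|w /orP[] /eqP->]; rewrite ?inE ?eqxx ?orbT.
  by rewrite -(uniq _ (minimum x (or_introl erefl))) (uniq _ (minimum y (or_intror erefl))).
exists (fun x y => R x y); split=> //; split=> //; split.
  move=> x y z Rxy Ryz.
  have [m [m_xyz min_m]] :=
    least (fun m => m = x \/ m = y \/ m = z) (ex_intro _ x (or_introl erefl)).
  have [Rmx [Rmy Rmz]] : R m x /\ R m y /\ R m z by split; [|split]; apply: min_m; auto.
  case: m_xyz Rmx Rmy Rmz => [|[|]] -> // Ryx.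
    by move=> _; rewrite (Rantisym _ _ Rxy Ryx).
  by move=> Rzy; rewrite (Rantisym _ _ Ryz Rzy) in Rxy.
split=> [x y|]; last exact: least.
by have [m [[]-> [? ?]]] := least2 x y; auto.
Qed.

Lemma no_injection_from_powerset (C : Type) (s : (C -> Prop) -> C) : ~ injective s.
Proof.
move=> s_inj; pose D c := exists P, s P = c /\ ~ P c.
have nDsD : ~ D (s D) by move=> DsD; case: (DsD) => P [/s_inj-> []].
by apply: (nDsD); exists D.
Qed.

Section Threads.
Context {J : Type} (le : J -> J -> Prop) (wo : well_order le).
Context {X : J -> Type} (X_inhabited : forall j, inhabited (X j)).
(* [p j y l] is the image of [y] at an earlier stage [l < j]; its values at [l >= j] are
   irrelevant. *)
Variable p : forall j, X j -> forall l, X l.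
Local Notation lt := (strict le).

Definition coherent_on (B : J -> Prop) (t : forall l, X l) : Prop :=
  forall l m, lt l m -> B m -> p m (t m) l = t l.

Definition presents {D : Type} (B : J -> Prop) (h : D -> forall l, X l) : Prop :=
  (forall y, coherent_on B (h y)) /\
  (forall t, coherent_on B t -> exists y, forall l, B l -> h y l = t l).

(* At [d = g], where [p g y g] is junk, the bonding map is the identity. *)
Definition bond (d g : J) (y : X g) : X d :=
  if pselect (d = g) is left e then eq_rect_r X y e else p g y d.

Lemma bond_id d y : bond d d y = y.
Proof. by rewrite /bond; case: pselect => // e; rewrite (Prop_irrelevance e erefl). Qed.

Lemma bond_lt d g y : lt d g -> bond d g y = p g y d.
Proof. by move=> [_ ndg]; rewrite /bond; case: pselect. Qed.

Lemma bond_comp d g e x : le d g -> le g e -> coherent_on (below le e) (p e x) ->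
  bond d e x = bond d g (bond g e x).
Proof.
move=> /le_eqVstrict[<-|dg]; first by rewrite bond_id.
move=> /le_eqVstrict[ge|ge]; first by subst g; rewrite bond_id.
by move=> coh; rewrite !bond_lt // ?coh //; exact: (strict_trans wo dg ge).
Qed.

Lemma coherent_on_bond B t d g : coherent_on B t -> le d g -> B g -> bond d g (t g) = t d.
Proof. by move=> coh /le_eqVstrict[<-|dg] Bg; rewrite ?bond_id // bond_lt // coh. Qed.

Section Extension.
Variable B : J -> Prop.
Hypothesis B_down : forall i k, lt i k -> B k -> B i.
Hypothesis B_presents : forall k, B k -> presents (below le k) (p k).

Lemma extend_to_thread {d} (x : X d) : B d -> exists t, coherent_on B t /\ t d = x.
Proof.
move=> Bd.
(* Up to [d] the thread is the image of [x]; above [d] each stage lifts the thread so far. *)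
pose Q l (t : forall l, X l) (y : X l) :=
  (le l d -> y = bond l d x) /\ (B l -> forall m, lt m l -> p l y m = t m).
have [t Qt] : exists t, forall l, Q l t (t l).
  apply: (transfinite_choice wo X Q X_inhabited) => [l t t' y tt' [bond_y coh_y]|l t IH].
    by split=> // Bl m ml; rewrite coh_y // tt'.
  case: (strict_or_le wo d l) => [dl|ld].
    have nld : ~ le l d.
      by move=> ld; case: dl => dl ndl; apply: ndl; exact: (wo_antisym wo dl ld).
    case: (EM (B l)) => [Bl|nBl]; last by case: (X_inhabited l) => y; exists y.
    have [|y ty] := (B_presents l Bl).2 t.
      by move=> m' m m'm ml; apply: (IH m ml).2 => //; apply: B_down Bl.
    by exists y; split=> // _ m ml; apply: ty.
  exists (bond l d x); split=> // Bl m ml.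
  rewrite -bond_lt // -bond_comp ?(IH m ml).1 //.
  - exact: (wo_trans wo ml.1 ld).
  - exact: ml.1.
  - exact: ((B_presents d Bd).1 x).
exists t; split; first by move=> l m lm Bm; apply: (Qt m).2.
by rewrite (Qt d).1 ?bond_id //; apply: wo_refl.
Qed.

Lemma presents_surjective {D : Type} (h : D -> forall l, X l) j :
  presents B h -> B j -> forall x : X j, exists y, h y j = x.
Proof.
move=> [_ h_onto] Bj x; have [t [coh_t tj]] := extend_to_thread x Bj.
by have [y hy] := h_onto t coh_t; exists y; rewrite hy.
Qed.

End Extension.

Lemma bond_surjective d g : le d g -> (forall k, le k g -> presents (below le k) (p k)) ->
  forall x : X d, exists y, bond d g y = x.
Proof.
move=> /le_eqVstrict[<- _ x|dg gk x]; first by exists x; rewrite bond_id.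
have [y gy] : exists y, p g y d = x.
  apply: (presents_surjective (below le g) _ _ (p g)) => //.
  - by move=> i k ik kg; exact: (strict_trans wo ik kg).
  - by move=> k kg; apply: gk; case: kg.
  - by apply: gk; apply: wo_refl.
by exists y; rewrite bond_lt.
Qed.

End Threads.

Lemma initial_open_preimage {X J : Type} (Y : J -> Type)
  (oY : forall j, (Y j -> Prop) -> Prop) (f : forall j, X -> Y j) j V :
  oY j V -> initial_open Y oY f (fun x => V (f j x)).
Proof.
move=> oV x Vx; exists (cons (fun x => V (f j x)) nil).
by split=> [U [<-|[]]|y /(_ _ (or_introl erefl))]; first by split=> //; exists j, V.
Qed.

Lemma epimorphism_id {G : Type} (D : GData G) : epimorphism D D id.
Proof. by split=> [V|]; [|split=> [y|]; [exists y|]]. Qed.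

Section Cones.
Context {G : Type} {J : Type} (le : J -> J -> Prop) (wo : well_order le).
Context (Xs : J -> GData G) (Xs_inhabited : forall j, inhabited (carrier (Xs j))).
Variable p : forall j, carrier (Xs j) -> forall l, carrier (Xs l).
Local Notation lt := (strict le).

Definition cone_on (B : J -> Prop) (D : GData G) (h : carrier D -> forall l, carrier (Xs l)) :=
  presents le p B h /\
  (forall a y l, B l -> h (gact D a y) l = gact (Xs l) a (h y l)) /\
  (forall l, B l -> continuous (gopen D) (gopen (Xs l)) (fun y => h y l)).

Definition good_stage (j : J) : Prop := cone_on (below le j) (Xs j) (p j).

Lemma bond_epimorphism d g : le d g -> (forall k, le k g -> good_stage k) ->
  epimorphism (Xs g) (Xs d) (bond p d g).
Proof.
move=> dg good.
have /le_eqVstrict[gd|{}dg] := dg.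
  subst d; rewrite (_ : bond p g g = id); first exact: epimorphism_id.
  by apply: funext => y; rewrite bond_id.
have [_ [eqv_g cont_g]] := good g (wo_refl wo g).
split; last split.
- rewrite (_ : bond p d g = fun y => p g y d); first exact: cont_g.
  by apply: funext => y; rewrite (bond_lt le).
- by apply: (bond_surjective le wo Xs_inhabited) => [|k /good[]]; first case: dg.
- by move=> a y; rewrite !(bond_lt le) // eqv_g.
Qed.

Lemma cone_comp B D L h f : cone_on B L h -> epimorphism D L f -> cone_on B D (fun y => h (f y)).
Proof.
move=> [[h_coh h_onto] [h_eqv h_cont]] [f_cont [f_onto f_eqv]].
split; first split=> [y|t /h_onto[z hz]]; first exact: h_coh.
  by have [y fy] := f_onto z; exists y; rewrite fy.
by split=> [a y l Bl|l Bl V oV]; [rewrite f_eqv h_eqv | exact: (f_cont _ (h_cont l Bl V oV))].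
Qed.

Lemma limit_cone (K : GData G -> Prop) (Hlim : closed_under_proj_limits K) (B : J -> Prop) :
  (forall i k, lt i k -> B k -> B i) -> (forall k, B k -> K (Xs k) /\ good_stage k) ->
  exists L h, K L /\ cone_on B L h.
Proof.
move=> B_down B_good.
have le_down i k : le i k -> B k -> B i by move=> /le_eqVstrict[->|] //; apply: B_down.
pose S := {i | B i}.
pose leS (s u : S) := le (proj1_sig s) (proj1_sig u).
pose XS (s : S) := Xs (proj1_sig s).
pose phiS (s u : S) : carrier (XS u) -> carrier (XS s) := bond p (proj1_sig s) (proj1_sig u).
have epiS s u : leS s u -> epimorphism (XS u) (XS s) (phiS s u).
  move=> su; apply: bond_epimorphism => // k ku.
  exact: (B_good k (le_down _ _ ku (proj2_sig u))).2.
have eqvS s u su := (epiS s u su).2.2.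
have KL : K (proj_limit leS XS phiS eqvS).
  apply: Hlim => //; first exact: well_order_sub.
  - by move=> s; exact: (B_good _ (proj2_sig s)).1.
  - by move=> s y; rewrite /phiS bond_id.
  - move=> s u v su uv y; apply: (bond_comp le wo) => //.
    exact: ((B_good _ (proj2_sig v)).2.1.1 y).
pose h (z : lim_carrier leS XS phiS) l : carrier (Xs l) :=
  if pselect (B l) is left Bl then proj1_sig z (exist _ l Bl)
  else epsilon (Xs_inhabited l) (fun _ => True).
have hE z l (Bl : B l) : h z l = proj1_sig z (exist _ l Bl).
  by rewrite /h; case: pselect => // Bl'; rewrite (Prop_irrelevance Bl' Bl).
exists (proj_limit leS XS phiS eqvS), h; split=> //; split; last split.
- split=> [z l m lm Bm|t coh_t].
    have Bl := B_down l m lm Bm.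
    rewrite (hE z l Bl) (hE z m Bm) -(bond_lt le) //.
    exact: (proj2_sig z (exist _ l Bl) (exist _ m Bm) lm.1).
  have t_coh s u : leS s u -> phiS s u (t (proj1_sig u)) = t (proj1_sig s).
    by move=> su; apply: (coherent_on_bond le p B) => //; exact: proj2_sig u.
  by exists (exist _ _ t_coh) => l Bl; rewrite (hE _ l Bl).
- by move=> a z l Bl; rewrite !(hE _ l Bl).
- move=> l Bl V oV /=.
  rewrite (_ : (fun z => V (h z l)) = fun z => V (proj1_sig z (exist _ l Bl))).
    exact: (initial_open_preimage _ _ _ (exist _ l Bl) V oV).
  by apply: funext => z; rewrite (hE z l Bl).
Qed.

End Cones.

Lemma cone_on_local {G J : Type} (le : J -> J -> Prop) (Xs : J -> GData G) p q B D h :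
  (forall m, B m -> p m = q m) -> cone_on le Xs p B D h -> cone_on le Xs q B D h.
Proof.
move=> pq; have coh_iff t : coherent_on le p B t <-> coherent_on le q B t.
  by split=> coh l m lm Bm; [rewrite -pq | rewrite pq] => //; apply: coh.
by move=> [[h_coh h_onto] h_rest]; split=> //; split=> [y|t /coh_iff/h_onto //]; apply/coh_iff.
Qed.

Section UniversalTower.
Context {G : Type} {mul : G -> G -> G} {one : G} {opG : (G -> Prop) -> Prop}.
Context {K : GData G -> Prop} (HK : collection_of_GSpaces mul one opG K).
Context (Hlim : closed_under_proj_limits K).
Context {J : Type} {le : J -> J -> Prop} (wo : well_order le).
Context {Xs : J -> GData G} (Xs_universal : forall j, universal K (Xs j)).

Lemma universal_inhabited j : inhabited (carrier (Xs j)).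
Proof. by case: (HK _ (Xs_universal j).1). Qed.

Lemma universal_tower : exists p, forall j, good_stage le Xs p j.
Proof.
apply: (transfinite_choice wo (fun j => carrier (Xs j) -> forall l, carrier (Xs l))
  (fun j p h => cone_on le Xs p (below le j) (Xs j) h)).
- by move=> j; constructor=> _ l; exact: (epsilon (universal_inhabited l) (fun _ => True)).
- by move=> j p q h pq; apply: cone_on_local.
move=> j p p_good.
have [||L [h [KL cone_h]]] := limit_cone le wo Xs universal_inhabited p K Hlim (below le j).
- by move=> i k ik kj; exact: (strict_trans wo ik kj).
- by move=> k kj; split; [exact: (Xs_universal k).1 | exact: p_good].
have [f epi_f] := (Xs_universal j).2 L KL.
by exists (fun y => h (f y)); apply: cone_comp epi_f.
Qed.

Lemma universal_cone {M : GData G} {p} : universal K M -> (forall j, good_stage le Xs p j) ->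
  exists pi, cone_on le Xs p (fun _ => True) M pi.
Proof.
move=> [_ M_univ] p_good.
have [||L [h [KL cone_h]]] :=
  limit_cone le wo Xs universal_inhabited p K Hlim (fun _ => True) => //.
  by move=> k _; split; [exact: (Xs_universal k).1 | exact: p_good].
have [f epi_f] := M_univ L KL.
by exists (fun y => h (f y)); apply: cone_comp epi_f.
Qed.

End UniversalTower.

Section Alternating.
Context {G : Type} {mul : G -> G -> G} {one : G} {opG : (G -> Prop) -> Prop}.
Context {K : GData G -> Prop} (HK : collection_of_GSpaces mul one opG K).
Context (Hlim : closed_under_proj_limits K).
Context {M1 M2 : GData G} (H1 : universal K M1) (H2 : universal K M2).
Context {I : Type} {leI : I -> I -> Prop} (woI : well_order leI).

Definition alternating (j : I * bool) : GData G := if j.2 then M1 else M2.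

Lemma isomorphic_or_injection :
  (exists f : carrier M1 -> carrier M2, isomorphism M1 M2 f) \/
  (exists s : I -> carrier M1 * carrier M1, injective s).
Proof.
have wo := lex_bool_well_order leI woI.
have univ j : universal K (alternating j) by rewrite /alternating; case: j.2.
have [p p_good] := universal_tower HK Hlim wo univ.
have [pi pi_cone] := universal_cone HK Hlim wo univ H1 p_good.
have pi_coh a l m : strict (lex_bool leI) l m -> p m (pi a m) l = pi a l.
  by move=> lm; apply: pi_cone.1.1.
have pi_onto j (x : carrier (alternating j)) : exists a, pi a j = x.
  apply: (presents_surjective _ wo (universal_inhabited HK univ) p (fun _ => True)) => //.
  - by move=> k _; case: (p_good k).
  - exact: pi_cone.1.
pose agree b i (a1 a2 : carrier M1) := pi a1 (i, b) = pi a2 (i, b).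
case: (EM (exists i, forall a1 a2, agree false i a1 a2 -> agree true i a1 a2)) => [[i sep]|nsep].
  left; exists (fun y => p (i, true) y (i, false)).
  have ft := lex_bool_false_true leI i.
  have [_ [eqv cont]] := p_good (i, true).
  split; first split; [exact: cont ft | split | ].
  - move=> w; have [a <-] := pi_onto (i, false) w.
    by exists (pi a (i, true)); exact: (pi_coh a _ _ ft).
  - by move=> a y; exact: (eqv a y _ ft).
  move=> u v; have [a1 <-] := pi_onto (i, true) u; have [a2 <-] := pi_onto (i, true) v.
  by rewrite !pi_coh //; apply: sep.
right.
have sep i : exists a : carrier M1 * carrier M1, agree false i a.1 a.2 /\ ~ agree true i a.1 a.2.
  apply: contrapT => nsep_i; apply: nsep; exists i => a1 a2 agree_f.
  by apply: contrapT => nagree_t; apply: nsep_i; exists (a1, a2).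
have [s s_sep] := choice sep; exists s.
have lt_sep i k : strict leI i k -> s i <> s k.
  move=> ik sik; apply: (s_sep i).2; rewrite /agree sik.
  have ik' := lex_bool_strict_fst leI true false _ _ ik.
  by rewrite -!(pi_coh _ _ _ ik') (s_sep k).1.
move=> i k sik; case: (strict_or_le woI i k) => [ik|/le_eqVstrict[//|ki]].
  by case: (lt_sep _ _ ik sik).
by case: (lt_sep _ _ ki (esym sik)).
Qed.

End Alternating.

Theorem mainTheorem1 (G : Type) (mul : G -> G -> G) (inv : G -> G) (one : G)
  (opG : (G -> Prop) -> Prop) (HG : is_topgroup mul inv one opG)
  (K : GData G -> Prop) (HK : collection_of_GSpaces mul one opG K)
  (Hlim : closed_under_proj_limits K)
  (M1 M2 : GData G) (H1 : universal K M1) (H2 : universal K M2) :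
  exists f : carrier M1 -> carrier M2, isomorphism M1 M2 f.
Proof.
have [leI woI] := exists_well_order (carrier M1 * carrier M1 -> Prop).
case: (isomorphic_or_injection HK Hlim H1 H2 woI) => // [[s s_inj]].
by case: (no_injection_from_powerset _ s s_inj).
Qed.
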